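(* Let $d$ be the discriminant of a real quadratic field and $p$ an odd prime not dividing $d$. Then $$\prod_{0<c<d/2}(-1)^{\lfloor pc/d\rfloor(\frac dc)}=\Big(\frac dp\Big)^{[d=8\text{ or } d\text{ is prime}]}.$$
   Context: $(\frac d{\cdot})$ is the Kronecker symbol (so $(\frac dc)=0$ when $\gcd(c,d)>1$); $\lfloor x\rfloor$ is the integer part. For an assertion $P$, $[P]=1$ if $P$ holds and $[P]=0$ otherwise. *)

From HB Require Import structures.
From mathcomp Require Import all_boot all_order all_algebra.
Set Implicit Arguments. Unset Strict Implicit. Unset Printing Implicit Defensive.
Import Order.TTheory GRing.Theory Num.Theory.

Definition squarefree (n : nat) : bool :=
  [forall p : 'I_n.+1, prime p ==> ~~ (p ^ 2 %| n)].

Definition real_quad_disc (d : nat) : bool :=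
  (1 < d) &&
  (((d %% 4 == 1) && squarefree d) ||
   ((d %% 4 == 0) && squarefree (d %/ 4) && ((d %/ 4) %% 4 \in [:: 2; 3]))).

Definition kron_prime (d q : nat) : int :=
  if q == 2 then
    (if ~~ ssrnat.odd d then 0%R
     else if ((d %% 8 == 1) || (d %% 8 == 7))%N then 1%R else (-1)%R)
  else if q %| d then 0%R
  else if [exists x : 'I_q, x ^ 2 == d %[mod q]] then 1%R else (-1)%R.

Definition kron (d n : nat) : int :=
  if n == 0 then (if d == 1 then 1%R else 0%R)
  else (\prod_(f <- prime_decomp n) kron_prime d f.1 ^+ f.2)%R.

From HB Require Import structures.
From mathcomp Require Import all_boot all_order all_algebra.
From mathcomp Require Import cyclic zify.
Import GRing.Theory.
Set Implicit Arguments. Unset Strict Implicit. Unset Printing Implicit Defensive.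

(* For 0 < c < d/2 the exponent is +-floor(pc/d) when gcd(c, d) = 1 and 0 otherwise,
   so the product is (-1)^S with S the sum of floor(pc/d) over the half system H of
   reduced residues in (0, d/2).  As in Gauss's lemma, folding pH back into H gives
   p^|H| = prod_c e_c: for odd d, e_c is 1 or d - 1 modulo d and the number of
   factors d - 1 has the parity of S; when 4 | d, e_c is 1, d - 1, d + 1 or 2d - 1
   modulo 2d, and floor(pc/d) is odd exactly for the last two.
   - d odd, squarefree and composite: |H| = (q - 1)|H_(d/q)| for a prime q | d, so
     p^|H| = 1 mod q by Fermat, which forces an even number of factors d - 1.
   - d = 4m <> 8: p^|H| = 1 mod K for K = 8 (K = 16 when 8 | d), and a character
     of {1, K/2 - 1, K/2 + 1, K - 1} mod K separates d +- 1 from 1, 2d - 1.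
   - d prime: Eisenstein's lattice-point count, with d/2 even, turns S into the
     analogous sum for d modulo p, which is (d/p) by Gauss's lemma and Euler's
     criterion; for d = 8, S = floor(p/8) + floor(3p/8) is matched with Gauss's
     count for 2 modulo p. *)

Lemma modn_mulr_cancel n k x y :
  coprime k n -> x * k = y * k %[mod n] -> x = y %[mod n].
Proof.
move=> cop; wlog le_yx : x y / y <= x => [W E|].
  by case: (leqP y x) => [/W|/ltnW/W /(_ (esym E))]; [apply | move->].
move/eqP; rewrite !eqn_mod_dvd ?leq_mul2r ?le_yx ?orbT // -mulnBl.
by rewrite Gauss_dvdl 1?coprime_sym // -eqn_mod_dvd //; move/eqP.
Qed.

Lemma modn_prod_congr n (I : eqType) (r : seq I) (F G : I -> nat) :
  {in r, forall i, F i = G i %[mod n]} ->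
  \prod_(i <- r) F i = \prod_(i <- r) G i %[mod n].
Proof.
elim: r => [|i r IH] FG; rewrite ?big_nil ?big_cons //.
rewrite -modnMm FG ?mem_head // IH ?modnMm // => j rj.
by apply: FG; rewrite inE rj orbT.
Qed.

Lemma perm_map_in (T : eqType) (s : seq T) (f : T -> T) :
  uniq s -> {in s, forall x, f x \in s} -> {in s &, injective f} ->
  perm_eq (map f s) s.
Proof.
move=> s_uniq fs f_inj; have fs_uniq : uniq (map f s) by rewrite map_inj_in_uniq.
have fs_sub : {subset map f s <= s} by move=> y /mapP [x sx ->]; apply: fs.
have [_ fsE] := uniq_min_size fs_uniq fs_sub (eq_leq (esym (size_map f s))).
exact: uniq_perm.
Qed.

Lemma gauss_product n a (H : seq nat) (f g : nat -> nat) :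
  uniq H -> {in H, forall c, coprime c n} ->
  {in H, forall c, f c \in H} -> {in H &, injective f} ->
  {in H, forall c, a * c = f c * g c %[mod n]} ->
  a ^ size H = \prod_(c <- H) g c %[mod n].
Proof.
move=> H_uniq copH fH f_inj afg.
have copP : coprime (\prod_(c <- H) c) n.
  rewrite big_seq; elim/big_ind: _ => [|x y|c /copH] //; first exact: coprime1n.
  by rewrite coprimeMl => -> ->.
apply: (modn_mulr_cancel copP).
have -> : a ^ size H * \prod_(c <- H) c = \prod_(c <- H) (a * c).
  by rewrite big_split /= big_const_seq count_predT iter_muln_1.
rewrite (modn_prod_congr afg) big_split /= mulnC.
rewrite -[in X in _ * X](big_map f xpredT id).
by rewrite (perm_big _ (perm_map_in H_uniq fH f_inj)).
Qed.

(** * Half systems of reduced residues *)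

Lemma coprime_subnl n r : r <= n -> coprime (n - r) n = coprime r n.
Proof. by move/subnK=> {2 3}<-; rewrite /coprime gcdnDl addnC gcdnDl [gcdn r _]gcdnC. Qed.

Lemma coprime_subnr n r : n <= r -> coprime (r - n) n = coprime r n.
Proof. by move/subnKC=> {2}<-; rewrite /coprime [gcdn (_ + _) _]gcdnC gcdnDl gcdnC. Qed.

Definition half_system n := [seq c <- index_iota 1 n | (2 * c < n) && coprime c n].

Lemma half_system_uniq n : uniq (half_system n).
Proof. by rewrite filter_uniq // iota_uniq. Qed.

Lemma mem_half_system n c :
  (c \in half_system n) = [&& 0 < c, c < n, 2 * c < n & coprime c n].
Proof. by rewrite mem_filter mem_index_iota andbC -!andbA. Qed.

Lemma half_system_odd n c : ~~ odd n -> c \in half_system n -> odd c.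
Proof.
move=> n_even; rewrite mem_half_system => /and4P [_ _ _].
apply: contraTT => c_even; apply/negP => /eqP gcd1.
have : 2 %| gcdn c n by rewrite dvdn_gcd !dvdn2 c_even n_even.
by rewrite gcd1.
Qed.

Lemma half_system_prime n : prime n -> odd n -> half_system n = index_iota 1 (n %/ 2).+1.
Proof.
move=> n_prime n_odd; have nE : n.-1 = n %/ 2 + n %/ 2.
  by move: (modn2 n); rewrite n_odd; lia.
rewrite /half_system /index_iota !subn1 /= nE iotaD filter_cat.
rewrite (eq_in_filter (a2 := predT)) ?filter_predT; last first.
  move=> c; rewrite mem_iota => c_bound /=; rewrite coprime_sym prime_coprime //.
  by rewrite gtnNdvd; lia.
rewrite (eq_in_filter (a2 := pred0)) ?filter_pred0 ?cats0 //.
by move=> c; rewrite mem_iota => c_bound /=; apply/negbTE; lia.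
Qed.

Lemma totient_half_system n : 2 < n -> totient n = 2 * size (half_system n).
Proof.
move=> n_gt2; rewrite totient_count_coprime big_ltn; last by lia.
rewrite /coprime gcdn0 gtn_eqF ?(ltnW n_gt2) // add0n size_filter -sumn_count.
rewrite sumnE big_map mul2n -addnn.
have halves c : 0 < c < n -> nat_of_bool (coprime n c) =
    ((2 * c < n) && coprime c n : nat) + ((n < 2 * c) && coprime c n : nat).
  move=> /andP [c_gt0 c_lt_n]; rewrite coprime_sym.
  case: ltngtP => //= two_c; rewrite ?addn0 //.
  have c_gt1 : 1 < c by rewrite -(ltn_pmul2l (isT : 0 < 2)) two_c.
  by rewrite /coprime -two_c gcdnMl gtn_eqF.
rewrite (eq_big_nat _ _ halves) big_split /=; congr (_ + _).
rewrite big_nat_rev /=; apply: eq_big_nat => c /andP [c_gt0 c_lt_n].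
rewrite add1n subSS coprime_subnl ?(ltnW c_lt_n) //.
by congr (_ && _); apply/idP/idP => ?; lia.
Qed.

Lemma size_half_system_mul m n : coprime m n -> 2 < n -> 2 < m * n ->
  size (half_system (m * n)) = totient m * size (half_system n).
Proof.
move=> cop n_gt2 mn_gt2; apply/eqP; rewrite -(eqn_pmul2l (isT : 0 < 2)) mulnCA.
by rewrite -!totient_half_system // totient_coprime.
Qed.

Lemma half_system_pm_inj n a (f : nat -> nat) : 0 < n -> coprime a n ->
  (forall x, f x = x %[mod n] \/ f x + x = 0 %[mod n]) ->
  {in half_system n &, injective (fun c => f (a * c))}.
Proof.
move=> n_gt0 cop f_pm c c'; rewrite !mem_half_system.
move=> /and4P [c_gt0 c_lt_n c_half _] /and4P [c'_gt0 c'_lt_n c'_half _] /= eq_f.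
have [] : a * c = a * c' %[mod n] \/ a * c + a * c' = 0 %[mod n].
  case: (f_pm (a * c)) (f_pm (a * c')) => fc [] fc'; rewrite eq_f in fc.
  - by left; rewrite -fc fc'.
  - by right; rewrite -modnDml -fc modnDml fc'.
  - by right; rewrite -modnDmr -fc' modnDmr addnC fc.
  - by left; apply/eqP; rewrite -(eqn_modDl (f (a * c'))) fc fc'.
- rewrite ![a * _]mulnC => /(modn_mulr_cancel cop).
  by rewrite !modn_small.
- rewrite -mulnDr mod0n => /eqP; rewrite -/(dvdn n _) Gauss_dvdr 1?coprime_sym //.
  by move/dvdn_leq; rewrite addn_gt0 c_gt0; lia.
Qed.

(** * Gauss's lemma modulo an odd number *)

Definition upper_res n x := n < 2 * (x %% n).

Definition abs_res n x := if upper_res n x then n - x %% n else x %% n.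

Lemma abs_res_pm n x : 0 < n ->
  abs_res n x = x %[mod n] \/ abs_res n x + x = 0 %[mod n].
Proof.
rewrite /abs_res => n_gt0; case: upper_res; last by left; rewrite modn_mod.
by right; rewrite -modnDmr subnK ?modnn ?mod0n //; exact/ltnW/ltn_pmod.
Qed.

Section OddGauss.

Variables n a : nat.
Hypotheses (n_odd : odd n) (n_gt1 : 1 < n) (a_coprime : coprime a n).

Let n_gt0 : 0 < n. Proof. exact: ltnW. Qed.

Lemma abs_res_half_system c :
  c \in half_system n -> abs_res n (a * c) \in half_system n.
Proof.
rewrite !mem_half_system => /and4P [_ _ _ c_coprime].
have r_lt_n : (a * c) %% n < n by exact: ltn_pmod.
have r_coprime : coprime ((a * c) %% n) n by rewrite coprime_modl coprimeMl a_coprime.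
have r_gt0 : 0 < (a * c) %% n.
  by rewrite lt0n; apply: contraTneq r_coprime => ->; rewrite /coprime gcd0n gtn_eqF.
have two_r : 2 * ((a * c) %% n) != n by apply: contraTneq n_odd => <-; rewrite oddM.
rewrite /abs_res /upper_res; case: ifP => upper.
  by rewrite coprime_subnl ?(ltnW r_lt_n) // r_coprime andbT; apply/and3P; split; lia.
by rewrite r_coprime andbT r_gt0 r_lt_n; lia.
Qed.

Lemma abs_res_half_system_inj :
  {in half_system n &, injective (fun c => abs_res n (a * c))}.
Proof. by apply: half_system_pm_inj => // x; apply: abs_res_pm. Qed.

Lemma gauss_lemma_odd :
  a ^ size (half_system n)
  = n.-1 ^ count (fun c => upper_res n (a * c)) (half_system n) %[mod n].
Proof.
have -> : n.-1 ^ count (fun c => upper_res n (a * c)) (half_system n)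
          = \prod_(c <- half_system n) if upper_res n (a * c) then n.-1 else 1.
  by rewrite -big_mkcond big_const_seq iter_muln_1.
apply: gauss_product (half_system_uniq n) _ abs_res_half_system abs_res_half_system_inj _.
  by move=> c; rewrite mem_half_system => /and4P [].
move=> c _; rewrite /abs_res; case: upper_res; last by rewrite muln1 modn_mod.
have : (a * c) %% n < n by exact: ltn_pmod.
move: ((a * c) %% n) => r r_lt_n.
by rewrite (_ : _ * _ = (n - r - 1) * n + r) ?modnMDl ?modn_small //; nia.
Qed.

(* Term by term, floor(ac/n) + c + abs_res n (ac) + [upper] is even, and
   c |-> abs_res n (ac) permutes the half system. *)
Lemma odd_sum_floor_half_system : odd a ->
  odd (\sum_(c <- half_system n) (a * c) %/ n)
  = odd (count (fun c => upper_res n (a * c)) (half_system n)).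
Proof.
move=> a_odd.
have even_term c :
    ~~ odd ((a * c) %/ n + c + abs_res n (a * c) + upper_res n (a * c)).
  have r_le_n : (a * c) %% n <= n by exact/ltnW/ltn_pmod.
  have := congr1 odd (divn_eq (a * c) n).
  rewrite oddM a_odd oddD oddM n_odd andbT /abs_res.
  by case: upper_res; rewrite /= !oddD ?oddB ?n_odd //; do 3!case: odd.
have abs_res_sum : \sum_(c <- half_system n) abs_res n (a * c)
                   = \sum_(c <- half_system n) c.
  rewrite -(big_map (fun c => abs_res n (a * c)) xpredT id); apply: perm_big.
  apply: perm_map_in (half_system_uniq n) _ abs_res_half_system_inj.
  exact: abs_res_half_system.
have : ~~ odd (\sum_(c <- half_system n)
                 ((a * c) %/ n + c + abs_res n (a * c) + upper_res n (a * c))).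
  elim/big_ind: _ => [//|x y|c _]; last exact: even_term.
  by rewrite oddD => /negbTE-> /negbTE->.
rewrite !big_split /= abs_res_sum -sumn_count sumnE big_map !oddD.
by do 3!case: odd.
Qed.

End OddGauss.

Lemma expn_pred_mod n k : 1 < n -> n.-1 ^ k = (if odd k then n.-1 else 1) %[mod n].
Proof.
move=> n_gt1; elim: k => [|k IHk] //=; rewrite expnS -modnMmr IHk modnMmr.
case: (odd k) => /=; last by rewrite muln1.
by rewrite (_ : _ * _ = (n - 2) * n + 1) ?modnMDl //; nia.
Qed.

Lemma squarefree_coprime_div n q :
  0 < n -> squarefree n -> prime q -> q %| n -> coprime q (n %/ q).
Proof.
move=> n_gt0 /forallP sqf q_prime q_dvd_n.
have q_le_n : q < n.+1 by rewrite ltnS dvdn_leq.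
have := sqf (Ordinal q_le_n); rewrite /= q_prime /= => /negP q2_ndvd.
rewrite prime_coprime //; apply: contra_notN q2_ndvd => q_dvd.
by rewrite -(divnK q_dvd_n) expnS expn1 dvdn_pmul2r ?prime_gt0.
Qed.

Lemma odd_composite_sum_floor_even d p :
  odd d -> 1 < d -> squarefree d -> ~~ prime d -> coprime p d -> odd p ->
  ~~ odd (\sum_(c <- half_system d) (p * c) %/ d).
Proof.
move=> d_odd d_gt1 d_sqf d_nprime p_coprime p_odd.
rewrite odd_sum_floor_half_system //.
have := gauss_lemma_odd d_odd d_gt1 p_coprime; rewrite expn_pred_mod //.
case: odd => // gauss.
set q := pdiv d; have q_prime : prime q := pdiv_prime d_gt1.
have q_dvd_d : q %| d := pdiv_dvd d.
have dE : d = q * (d %/ q) by rewrite mulnC divnK.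
have /andP [q_odd d'_odd] : odd q && odd (d %/ q) by rewrite -oddM -dE.
have d'_gt2 : 2 < d %/ q.
  have d'_gt0 : 0 < d %/ q by rewrite divn_gt0 ?prime_gt0 // dvdn_leq // ltnW.
  have : d %/ q != 1 by apply: contraNneq d_nprime; rewrite {2}dE => ->; rewrite muln1.
  by move: d'_odd d'_gt0; case: (d %/ q) => [|[|[|k]]] //; rewrite eqxx.
have d_gt2 : 2 < d := leq_trans d'_gt2 (leq_div d q).
have size_half : size (half_system d) = q.-1 * size (half_system (d %/ q)).
  rewrite -(totient_prime q_prime) {1}dE size_half_system_mul -?dE //.
  by rewrite squarefree_coprime_div // ltnW.
have fermat : p ^ q.-1 = 1 %[mod q].
  rewrite -(totient_prime q_prime) Euler_exp_totient //.
  exact: coprime_dvdr q_dvd_d p_coprime.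
(* Modulo q, the left-hand side of gauss is 1 by Fermat but its right-hand side is -1. *)
move: gauss; rewrite size_half expnM => /(congr1 (modn^~ q)).
rewrite !modn_dvdm // -modnXm fermat modnXm exp1n => /eqP.
rewrite eq_sym eqn_mod_dvd; last by rewrite -subn1 leq_subRL; lia.
move/(dvdn_sub q_dvd_d); rewrite (_ : d - _ = 2); last by lia.
by move/(dvdn_leq (isT : 0 < 2)); rewrite leqNgt odd_prime_gt2.
Qed.

(** * Euler's criterion and Eisenstein's lattice-point count *)

Lemma Fp_nat_eq p m n : prime p -> ((m%:R : 'F_p) == n%:R)%R = (m == n %[mod p]).
Proof.
move=> p_prime; apply/eqP/eqP => [|mn]; last by rewrite -(Fp_nat_mod p_prime) mn Fp_nat_mod.
by move/(congr1 val); rewrite /= !val_Fp_nat.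
Qed.

Lemma sqr_mod_inj p i j : prime p -> 0 < i -> 0 < j -> i + j < p ->
  i ^ 2 = j ^ 2 %[mod p] -> i = j.
Proof.
move=> p_prime; wlog le_ji : i j / j <= i => [W i_gt0 j_gt0 ij_lt E|].
  by case: (leqP j i) => [/W|/ltnW/W] ->; rewrite // addnC.
move=> i_gt0 j_gt0 ij_lt /eqP; rewrite eqn_mod_dvd ?leq_exp2r // subn_sqr.
rewrite Euclid_dvdM // => /orP [/dvdn_leq|/dvdn_leq]; rewrite ?addn_gt0 ?i_gt0; lia.
Qed.

Lemma euler_criterion p x : prime p -> odd p -> coprime x p ->
  [exists y : 'I_p, y ^ 2 == x %[mod p]] = (x ^ (p %/ 2) == 1 %[mod p]).
Proof.
move=> p_prime p_odd x_coprime.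
have pE : p.-1 = 2 * (p %/ 2) by move: (modn2 p); rewrite p_odd; lia.
have fermat y : coprime y p -> y ^ p.-1 = 1 %[mod p].
  by rewrite -(totient_prime p_prime); apply: Euler_exp_totient.
apply/idP/idP => [/existsP [y /eqP yx] | /eqP x_root].
  have y_coprime : coprime y p by rewrite -(@coprime_pexpl 2) // -coprime_modl yx coprime_modl.
  by rewrite -modnXm -yx modnXm -expnM -pE fermat.
(* Otherwise X^(p/2) - 1 has the p/2 + 1 roots x, 1^2, ..., (p/2)^2. *)
apply: contraT => /existsPn x_nsq.
have h_gt0 : 0 < p %/ 2 by rewrite divn_gt0 // prime_gt1.
pose roots : seq 'F_p := (x%:R :: [seq (i ^ 2)%:R | i <- iota 1 (p %/ 2)])%R.
have roots_uniq : uniq roots.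
  rewrite /= map_inj_in_uniq ?iota_uniq ?andbT.
    apply/mapP => [[i]]; rewrite mem_iota => i_bound /eqP.
    rewrite Fp_nat_eq // eq_sym => /eqP sq.
    have i_lt_p : i < p by lia.
    by have /negP := x_nsq (Ordinal i_lt_p); rewrite /= sq.
  move=> i j; rewrite !mem_iota => i_bound j_bound /eqP; rewrite Fp_nat_eq // => /eqP.
  by apply: sqr_mod_inj; lia.
have roots_root : all (root ('X^(p %/ 2) - 1 : {poly 'F_p})) roots.
  apply/allP => z; rewrite inE => /orP [/eqP-> | /mapP [i i_bound ->]];
    rewrite /root !hornerE subr_eq0 -natrX -[1%R]/(1%:R)%R Fp_nat_eq //.
    exact/eqP.
  rewrite -expnM -pE; apply/eqP/fermat; rewrite coprime_sym prime_coprime //.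
  by rewrite mem_iota in i_bound; rewrite gtnNdvd //; lia.
have := max_poly_roots _ roots_root roots_uniq.
by rewrite -size_poly_eq0 size_XnsubC //= size_map size_iota ltnn; apply.
Qed.

Lemma sum_leq_nat n k : \sum_(1 <= y < n.+1) (y <= k : nat) = minn n k.
Proof.
elim: n => [|n IHn]; first by rewrite big_geq // min0n.
by rewrite big_nat_recr //= IHn; case: (leqP n.+1 k) => /=; lia.
Qed.

Lemma divn_as_count m d n : 0 < d -> m %/ d <= n ->
  m %/ d = \sum_(1 <= y < n.+1) (y * d <= m : nat).
Proof.
move=> d_gt0 mn; rewrite (eq_big_nat _ _ (F2 := fun y => (y <= m %/ d : nat))).
  by rewrite sum_leq_nat; lia.
by move=> y _; rewrite leq_divRL.
Qed.

Lemma sum_floor_reciprocity p d : coprime p d -> odd p -> odd d ->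
  \sum_(1 <= x < (d %/ 2).+1) (p * x) %/ d + \sum_(1 <= y < (p %/ 2).+1) (d * y) %/ p
  = d %/ 2 * (p %/ 2).
Proof.
move=> cop p_odd d_odd.
have dE : d = 2 * (d %/ 2) + 1 by move: (modn2 d); rewrite d_odd; lia.
have pE : p = 2 * (p %/ 2) + 1 by move: (modn2 p); rewrite p_odd; lia.
move: (d %/ 2) (p %/ 2) dE pE => A B dE pE.
have d_gt0 : 0 < d by rewrite dE addn1.
have p_gt0 : 0 < p by rewrite pE addn1.
have off_diagonal x y : 0 < x <= A -> p * x != d * y.
  move=> /andP [x_gt0 x_le]; apply: contraTneq isT => pxy.
  have : d %| x by rewrite -(@Gauss_dvdr d p) 1?coprime_sym // pxy dvdn_mulr.
  by move/(dvdn_leq x_gt0); lia.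
have rowE x : 1 <= x < A.+1 ->
    (p * x) %/ d = \sum_(1 <= y < B.+1) (y * d <= p * x : nat).
  by case/andP=> x_gt0 x_le; apply: divn_as_count => //; rewrite -ltnS ltn_divLR //; nia.
have columnE y : 1 <= y < B.+1 ->
    (d * y) %/ p = \sum_(1 <= x < A.+1) (x * p <= d * y : nat).
  by case/andP=> y_gt0 y_le; apply: divn_as_count => //; rewrite -ltnS ltn_divLR //; nia.
rewrite (eq_big_nat _ _ rowE) [X in _ + X](eq_big_nat _ _ columnE).
rewrite [X in _ + X]exchange_big_nat -big_split /=.
rewrite (eq_big_nat _ _ (F2 := fun => B)) ?sum_nat_const_nat ?subn1 1?mulnC //.
move=> x x_bound; rewrite -big_split /= (eq_big_nat _ _ (F2 := fun => 1)).
  by rewrite sum_nat_const_nat subn1 muln1.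
move=> y _; have /negbTE := off_diagonal x y x_bound.
by rewrite [x * p]mulnC [y * d]mulnC; case: ltngtP.
Qed.

Lemma count_gt_index_iota n k : k <= n ->
  count (fun c => k < c) (index_iota 1 n.+1) = n - k.
Proof.
move=> k_le_n; have := count_predC (fun c => c <= k) (index_iota 1 n.+1).
rewrite size_iota -sumn_count sumnE big_map sum_leq_nat (minn_idPr k_le_n).
by rewrite (eq_count (a2 := fun c => k < c)) => [|c]; rewrite /= ?ltnNge; lia.
Qed.

Lemma count_upper_res_two p : odd p ->
  count (fun c => upper_res p (2 * c)) (index_iota 1 (p %/ 2).+1) = p %/ 2 - p %/ 4.
Proof.
move=> p_odd; rewrite -count_gt_index_iota; last by lia.
apply: eq_in_count => c; rewrite mem_index_iota => c_bound.
by rewrite /upper_res modn_small; move: (modn2 p); rewrite p_odd; lia.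
Qed.

Lemma odd_floor_eighths p : odd p ->
  odd (p * 1 %/ 8 + p * 3 %/ 8) = odd (p %/ 2 - p %/ 4).
Proof.
move=> p_odd; have : (p * 1 %/ 8 + p * 3 %/ 8) %% 2 = (p %/ 2 - p %/ 4) %% 2.
  by move: (modn2 p); rewrite p_odd; lia.
by rewrite !modn2; do 2!case: odd.
Qed.

(** * Discriminants divisible by 4 *)

(* When 4 | d and r < 2d is odd and prime to d, r = fold_even d r * sign_even d r
   mod 2d, with fold_even d r in the half system and sign_even d r one of the
   units 1, d - 1, d + 1, 2d - 1, which are +-1 mod d. *)
Definition fold_even d r :=
  if 2 * r < d then r else if r < d then d - r
  else if 2 * r < 3 * d then r - d else 2 * d - r.

Definition sign_even d r :=
  if 2 * r < d then 1 else if r < d then d.-1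
  else if 2 * r < 3 * d then d.+1 else (2 * d).-1.

Section FoldEven.

Variables d r : nat.
Hypotheses (d_mod4 : d %% 4 = 0) (r_odd : odd r) (r_lt : r < 2 * d).

Lemma fold_even_half_system : coprime r d -> fold_even d r \in half_system d.
Proof.
move=> r_coprime; have r_mod2 : r %% 2 = 1 by rewrite modn2 r_odd.
rewrite /fold_even mem_half_system.
case: ifPn => [lo|lo]; first by rewrite r_coprime andbT; lia.
case: ifPn => [mid|mid]; first by rewrite coprime_subnl ?r_coprime ?andbT; lia.
case: ifPn => [hi|hi]; first by rewrite coprime_subnr ?r_coprime ?andbT; lia.
rewrite (_ : 2 * d - r = d - (r - d)); last by lia.
by rewrite coprime_subnl ?coprime_subnr ?r_coprime ?andbT; lia.
Qed.

Lemma fold_even_eq : r = fold_even d r * sign_even d r %[mod 2 * d].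
Proof.
have [k dE] : exists k, d = 4 * k by exists (d %/ 4); lia.
have [s rE] : exists s, r = 2 * s + 1.
  by exists (r %/ 2); move: (modn2 r); rewrite r_odd; lia.
rewrite /fold_even /sign_even; case: ifPn => lo; first by rewrite muln1.
case: ifPn => [mid|mid]; last case: ifPn => [hi|hi].
- rewrite [in RHS](_ : (d - r) * d.-1 = (2 * k - s - 1) * (2 * d) + r) ?modnMDl //.
  by nia.
- rewrite [in RHS](_ : (r - d) * d.+1 = (s - 2 * k) * (2 * d) + r) ?modnMDl //.
  by nia.
- rewrite [in RHS](_ : (2 * d - r) * (2 * d).-1 = (2 * d - r - 1) * (2 * d) + r) ?modnMDl //.
  by nia.
Qed.

Lemma fold_even_pm : fold_even d r = r %[mod d] \/ fold_even d r + r = 0 %[mod d].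
Proof.
rewrite /fold_even; case: ifPn => lo; first by left.
case: ifPn => [mid|mid]; first by right; rewrite subnK ?modnn ?mod0n //; exact: ltnW.
have d_le_r : d <= r by rewrite leqNgt.
case: ifPn => hi; first by left; rewrite -[in RHS](subnK d_le_r) modnDr.
by right; rewrite subnK ?modnMl ?mod0n //; exact: ltnW.
Qed.

End FoldEven.

Lemma gauss_lemma_even d a : d %% 4 = 0 -> 0 < d -> coprime a d -> odd a ->
  a ^ size (half_system d)
  = \prod_(c <- half_system d) sign_even d ((a * c) %% (2 * d)) %[mod 2 * d].
Proof.
move=> d_mod4 d_gt0 a_coprime a_odd.
have d_even : ~~ odd d by rewrite -dvdn2 (@dvdn_trans 4) // /dvdn d_mod4.
have dd_gt0 : 0 < 2 * d by rewrite muln_gt0.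
have res_facts c : c \in half_system d ->
    [/\ odd ((a * c) %% (2 * d)), (a * c) %% (2 * d) < 2 * d
      & coprime ((a * c) %% (2 * d)) d].
  move=> c_in; have c_odd := half_system_odd d_even c_in.
  move: c_in; rewrite mem_half_system => /and4P [_ _ _ c_coprime].
  split; first by rewrite odd_mod ?oddM ?a_odd.
    by rewrite ltn_pmod.
  by rewrite -coprime_modl modn_dvdm ?dvdn_mull // coprime_modl coprimeMl a_coprime.
apply: (gauss_product (f := fun c => fold_even d ((a * c) %% (2 * d))) (half_system_uniq d)).
- move=> c c_in; rewrite coprimeMr coprimen2 (half_system_odd d_even c_in).
  by move: c_in; rewrite mem_half_system => /and4P [].
- by move=> c /res_facts [r_odd r_lt r_coprime]; apply: fold_even_half_system.
- apply: (half_system_pm_inj (f := fun x => fold_even d (x %% (2 * d)))) => // x /=.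
  have x_mod : x %% (2 * d) = x %[mod d] by rewrite modn_dvdm ?dvdn_mull.
  have [eq|eq] := fold_even_pm (ltn_pmod x dd_gt0); [left|right].
    by rewrite eq x_mod.
  by rewrite -modnDmr -x_mod modnDmr eq.
- move=> c /res_facts [r_odd r_lt r_coprime].
  by rewrite -(fold_even_eq d_mod4 r_odd r_lt) modn_mod.
Qed.

Lemma odd_divn_mod_double x d : 0 < d -> odd (x %/ d) = (d <= x %% (2 * d)).
Proof.
move=> d_gt0; have := modn2 (x %/ d); rewrite modn_divl.
have : x %% (2 * d) < 2 * d by rewrite ltn_pmod ?muln_gt0.
move: (x %% (2 * d)) => r r_lt; case: (leqP d r) => [d_le_r|r_lt_d].
  suff -> : r %/ d = 1 by case: odd.
  by apply/eqP; rewrite eqn_leq leq_divRL // mul1n d_le_r andbT -ltnS ltn_divLR // mulnC.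
by rewrite divn_small //; case: odd.
Qed.

Lemma odd_sum_count (I : Type) (r : seq I) (F : I -> nat) :
  odd (\sum_(i <- r) F i) = odd (count (fun i => odd (F i)) r).
Proof.
by elim: r => [|i r IHr]; rewrite ?big_nil ?big_cons //= oddD IHr oddD; case: odd.
Qed.

(* For K = 8 or 16 these four classes form a subgroup of (Z/K)^*, on which chi is
   the character with kernel {1, K/2 - 1}; when d = K/2 mod K it tells whether
   sign_even d r was produced by an r < d. *)
Definition sign_classes K := [:: 1; K %/ 2 - 1; K %/ 2 + 1; K - 1].

Definition chi K x := (x %% K == 1) || (x %% K == K %/ 2 - 1).

Lemma chi_mul K a b : K = 8 \/ K = 16 ->
  a %% K \in sign_classes K -> b %% K \in sign_classes K ->
  ((a * b) %% K \in sign_classes K) && (chi K (a * b) == (chi K a == chi K b)).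
Proof.
rewrite /chi -[(a * b) %% K]modnMm -[a %% K]modn_mod -[b %% K]modn_mod.
move: (a %% K) (b %% K) => {}a {}b.
by case=> ->; rewrite !inE => /or4P [] /eqP -> /or4P [] /eqP ->.
Qed.

Lemma chi_prod K (I : eqType) (r : seq I) (g : I -> nat) : K = 8 \/ K = 16 ->
  {in r, forall i, g i %% K \in sign_classes K} ->
  ((\prod_(i <- r) g i) %% K \in sign_classes K)
  && (chi K (\prod_(i <- r) g i) == ~~ odd (count (fun i => ~~ chi K (g i)) r)).
Proof.
move=> K_cases; elim: r => [|i r IHr] g_in; rewrite ?big_nil ?big_cons /=.
  by case: K_cases => ->.
have /andP [prod_in /eqP chi_prod_r] :=
  IHr (fun j rj => g_in j (mem_behead (s := i :: r) rj)).
have /andP [-> /eqP ->] := chi_mul K_cases (g_in i (mem_head i r)) prod_in.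
by rewrite chi_prod_r oddD; case: chi; case: odd.
Qed.

Lemma sign_even_class K d r : K = 8 \/ K = 16 -> d %% K = K %/ 2 ->
  (sign_even d r %% K \in sign_classes K) && (chi K (sign_even d r) == (r < d)).
Proof.
move=> K_cases d_mod.
have [one dm1 dp1 ddm1] : [/\ 1 %% K = 1, d.-1 %% K = K %/ 2 - 1,
                              d.+1 %% K = K %/ 2 + 1 & (2 * d).-1 %% K = K - 1].
  by case: K_cases d_mod => -> d_mod; split; lia.
rewrite /chi /sign_even; case: ifPn => [lo|lo]; last case: ifPn => [mid|mid].
- rewrite one (leq_ltn_trans (leq_pmull r (isT : 0 < 2)) lo).
  by case: K_cases => ->.
- by rewrite dm1; case: K_cases => ->.
- by case: ifP => _; rewrite ?dp1 ?ddm1; case: K_cases => ->.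
Qed.

Lemma sum_floor_even_mod K d p : K = 8 \/ K = 16 -> d %% K = K %/ 2 ->
  coprime p d -> odd p -> p ^ size (half_system d) = 1 %[mod K] ->
  ~~ odd (\sum_(c <- half_system d) (p * c) %/ d).
Proof.
move=> K_cases d_mod p_coprime p_odd p_pow.
have [d_gt0 d_mod4 K_dvd] : [/\ 0 < d, d %% 4 = 0 & K %| 2 * d].
  rewrite (_ : 2 * d = (2 * (d %/ K) + 1) * K) ?dvdn_mull //.
    by case: K_cases d_mod => -> d_mod; split; lia.
  by case: K_cases d_mod => -> d_mod; lia.
have prod_one : \prod_(c <- half_system d) sign_even d ((p * c) %% (2 * d)) = 1 %[mod K].
  by rewrite -(modn_dvdm _ K_dvd) -gauss_lemma_even // modn_dvdm.
have classes c : sign_even d ((p * c) %% (2 * d)) %% K \in sign_classes K.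
  by have /andP [] := sign_even_class ((p * c) %% (2 * d)) K_cases d_mod.
have /andP [_ /eqP] := chi_prod (r := half_system d) K_cases (fun c _ => classes c).
rewrite {1}/chi prod_one modn_small; last by case: K_cases => ->.
rewrite eqxx /= => /esym count_even; rewrite odd_sum_count.
rewrite (eq_count (a2 := fun c => ~~ chi K (sign_even d ((p * c) %% (2 * d))))) // => c.
have /andP [_ /eqP ->] := sign_even_class ((p * c) %% (2 * d)) K_cases d_mod.
by rewrite odd_divn_mod_double // leqNgt.
Qed.

Lemma sqr_odd_mod8 p : odd p -> p ^ 2 = 1 %[mod 8].
Proof.
move=> p_odd; rewrite -modnXm; have : p %% 8 < 8 by rewrite ltn_pmod.
have : odd (p %% 8) by rewrite odd_mod.
by move: (p %% 8) => r; do 8!case: r => [|r] //.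
Qed.

Lemma expn4_odd_mod16 p : odd p -> p ^ 4 = 1 %[mod 16].
Proof.
move=> p_odd; rewrite -modnXm; have : p %% 16 < 16 by rewrite ltn_pmod.
have : odd (p %% 16) by rewrite odd_mod.
by move: (p %% 16) => r; do 16!case: r => [|r] //.
Qed.

Lemma even_disc_sum_floor_even d p :
  d %% 4 = 0 -> (d %/ 4) %% 4 \in [:: 2; 3] -> d != 8 -> coprime p d -> odd p ->
  ~~ odd (\sum_(c <- half_system d) (p * c) %/ d).
Proof.
move=> d_mod4 m_mod4 d_neq8 p_coprime p_odd.
move: m_mod4; rewrite !inE => /orP [] /eqP m_mod4.
- have m_odd : odd (d %/ 8) by move: (modn2 (d %/ 8)); lia.
  have m_gt2 : 2 < d %/ 8 by move: (modn2 (d %/ 8)); rewrite m_odd; lia.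
  apply: (sum_floor_even_mod (or_intror erefl)) => //; first by lia.
  have dE : d = 8 * (d %/ 8) by lia.
  have cop : coprime 8 (d %/ 8) by rewrite (@coprime_pexpl 3 2) // coprime2n.
  rewrite {1}dE size_half_system_mul //; last by lia.
  by rewrite expnM -modnXm expn4_odd_mod16 // modnXm exp1n.
- have m_odd : odd (d %/ 4) by move: (modn2 (d %/ 4)); lia.
  have m_gt2 : 2 < d %/ 4 by lia.
  apply: (sum_floor_even_mod (or_introl erefl)) => //; first by lia.
  have dE : d = 4 * (d %/ 4) by lia.
  have cop : coprime 4 (d %/ 4) by rewrite (@coprime_pexpl 2 2) // coprime2n.
  rewrite {1}dE size_half_system_mul //; last by lia.
  by rewrite expnM -modnXm sqr_odd_mod8 // modnXm exp1n.
Qed.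

Section Kronecker.

Local Open Scope ring_scope.

Lemma kron_primes d c : (0 < c)%N ->
  kron d c = \prod_(q <- primes c) kron_prime d q ^+ logn q c.
Proof. by rewrite /kron prime_decompE big_map => /lt0n_neq0 /negbTE ->. Qed.

Lemma kron_prime_eq d p : prime p -> kron d p = kron_prime d p.
Proof.
move=> p_prime; rewrite kron_primes ?prime_gt0 // primes_prime // big_seq1.
by rewrite logn_prime // eqxx expr1.
Qed.

Lemma sqr_kron_prime d q : ~~ (q %| d)%N -> kron_prime d q ^+ 2 = 1.
Proof.
rewrite /kron_prime => q_ndvd; case: eqP => [q2|_].
  by move: q_ndvd; rewrite q2 dvdn2 negbK => ->; case: ifP.
by rewrite (negbTE q_ndvd); case: ifP.
Qed.

Lemma sqr_kron_coprime d c : (0 < c)%N -> coprime c d -> kron d c ^+ 2 = 1.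
Proof.
move=> c_gt0 cop; rewrite kron_primes // -prodrXl big_seq big1 // => q.
rewrite mem_primes => /and3P [q_prime _ q_dvd_c].
rewrite -exprM mulnC exprM sqr_kron_prime ?expr1n //.
by rewrite -prime_coprime // (coprime_dvdl q_dvd_c cop).
Qed.

Lemma kron_prime_dvd d q : prime q -> (q %| d)%N -> kron_prime d q = 0.
Proof.
rewrite /kron_prime => q_prime q_dvd_d; case: eqP => [q2|_]; last by rewrite q_dvd_d.
by move: q_dvd_d; rewrite q2 dvdn2 => ->.
Qed.

Lemma kron_ncoprime d c : (0 < c)%N -> (0 < d)%N -> ~~ coprime c d -> kron d c = 0.
Proof.
move=> c_gt0 d_gt0; rewrite coprime_has_primes // negbK => /hasP [q q_d q_c].
rewrite kron_primes // (big_rem q) //= kron_prime_dvd.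
- by rewrite expr0n gtn_eqF ?mul0r // logn_gt0.
- by move: q_d; rewrite mem_primes => /andP [].
- by move: q_d; rewrite mem_primes => /and3P [].
Qed.

Lemma expN1z_mul_sqr1 (k : nat) (z : int) :
  z ^+ 2 = 1 -> (-1) ^ (k%:Z * z) = (-1) ^+ k :> int.
Proof.
move/eqP; rewrite sqrf_eq1 => /orP [] /eqP ->; first by rewrite mulr1.
by rewrite mulrN1 -exprz_inv invrN1.
Qed.

Lemma prod_sign_kron d p : (1 < d)%N ->
  \prod_(1 <= c < d | (2 * c < d)%N) ((-1 : int) ^ (((p * c) %/ d)%N%:Z * kron d c))
  = (-1) ^+ (\sum_(c <- half_system d) (p * c) %/ d)%N.
Proof.
move=> d_gt1; rewrite -prodrXr big_filter big_mkcond [RHS]big_mkcond.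
apply: eq_big_nat => c /andP [c_gt0 c_lt_d] /=; case: (2 * c < d)%N => //=.
have [cop|ncop] := boolP (coprime c d); first by rewrite expN1z_mul_sqr1 ?sqr_kron_coprime.
by rewrite kron_ncoprime ?mulr0 // ltnW.
Qed.

Lemma kron_prime_euler a p k : prime p -> odd p -> coprime a p ->
  (a ^ (p %/ 2) = p.-1 ^ k %[mod p])%N -> kron_prime a p = (-1) ^+ k.
Proof.
move=> p_prime p_odd cop; rewrite expn_pred_mod ?prime_gt1 // => euler.
have p_gt2 := odd_prime_gt2 p_odd p_prime.
have p_ndvd_a : ~~ (p %| a)%N by rewrite -prime_coprime // coprime_sym.
rewrite /kron_prime gtn_eqF // (negbTE p_ndvd_a).
rewrite euler_criterion // -signr_odd euler; case: odd; rewrite ?eqxx //.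
by rewrite !modn_small ?gtn_eqF ?expr1 //; lia.
Qed.

Lemma prime_disc_sign d p : prime d -> (d %% 4 = 1)%N -> prime p -> odd p ->
  ~~ (p %| d)%N -> (-1) ^+ (\sum_(c <- half_system d) (p * c) %/ d)%N = kron d p.
Proof.
move=> d_prime d_mod4 p_prime p_odd p_ndvd_d.
have d_odd : odd d by move: (modn2 d); lia.
have cop_pd : coprime p d by rewrite prime_coprime.
have cop_dp : coprime d p by rewrite coprime_sym.
have := sum_floor_reciprocity cop_pd p_odd d_odd.
rewrite -(half_system_prime p_prime p_odd) -(half_system_prime d_prime d_odd).
move/(congr1 odd); rewrite oddD oddM (_ : odd (d %/ 2) = false); last first.
  by move: (modn2 (d %/ 2)); lia.
rewrite andFb (odd_sum_floor_half_system p_odd (prime_gt1 p_prime) cop_dp d_odd).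
move/negbT; rewrite negb_add => /eqP odd_sum_d.
have gauss := gauss_lemma_odd p_odd (prime_gt1 p_prime) cop_dp.
rewrite [in size _]half_system_prime // size_iota subn1 /= in gauss.
rewrite -signr_odd odd_sum_d kron_prime_eq //.
by rewrite (kron_prime_euler p_prime p_odd cop_dp gauss) signr_odd.
Qed.

Lemma disc8_sign p : prime p -> odd p ->
  (-1) ^+ (\sum_(c <- half_system 8) (p * c) %/ 8)%N = kron 8 p.
Proof.
move=> p_prime p_odd.
have cop2 : coprime 2 p by rewrite coprime2n.
have cop8 : coprime 8 p by rewrite (@coprime_pexpl 3 2 p).
have gauss := gauss_lemma_odd p_odd (prime_gt1 p_prime) cop2.
rewrite half_system_prime // count_upper_res_two // size_iota subn1 /= in gauss.
have gauss8 : (8 ^ (p %/ 2) = p.-1 ^ (3 * (p %/ 2 - p %/ 4)) %[mod p])%N.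
  by rewrite (_ : 8 = 2 ^ 3)%N // -expnM mulnC expnM -modnXm gauss modnXm -expnM mulnC.
rewrite kron_prime_eq // (kron_prime_euler p_prime p_odd cop8 gauss8).
rewrite (_ : half_system 8 = [:: 1; 3]%N) // !big_cons big_nil addn0.
rewrite -signr_odd -[RHS]signr_odd.
by rewrite odd_floor_eighths // oddM.
Qed.

End Kronecker.

Local Open Scope ring_scope.

Theorem mainTheorem8 (d p : nat) :
  real_quad_disc d -> prime p -> ssrnat.odd p -> ~~ (p %| d)%N ->
  \prod_(1 <= c < d | (2 * c < d)%N)
      ((-1 : int) ^ (((p * c) %/ d)%N%:Z * kron d c))
  = kron d p ^+ ((d == 8%N) || prime d).
Proof.
move=> /andP [d_gt1 d_disc] p_prime p_odd p_ndvd_d.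
have p_coprime : coprime p d by rewrite prime_coprime.
rewrite prod_sign_kron //.
case/orP: d_disc => [/andP [/eqP d_mod4 d_sqf] | /andP [/andP [/eqP d_mod4 _] m_mod4]].
- have d_odd : odd d by move: (modn2 d); lia.
  rewrite (negbTE (_ : d != 8%N)) /=; last by apply: contraTneq d_odd => ->.
  have [d_prime | d_nprime] := boolP (prime d); first by rewrite expr1 prime_disc_sign.
  have := odd_composite_sum_floor_even d_odd d_gt1 d_sqf d_nprime p_coprime p_odd.
  by rewrite expr0 -signr_odd => /negbTE ->.
- have [-> | d_neq8] := eqVneq d 8%N; first by rewrite expr1 disc8_sign.
  have d_nprime : prime d = false.
    apply/negP => /primeP [_ /(_ 2)]; rewrite (@dvdn_trans 4) /dvdn ?d_mod4 //=.
    by move/(_ isT)/eqP => d2; rewrite -d2 in d_mod4.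
  have := even_disc_sum_floor_even d_mod4 m_mod4 d_neq8 p_coprime p_odd.
  by rewrite d_nprime expr0 -signr_odd => /negbTE ->.
Qed.
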